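(* Let $(\alpha_j)_{j\ge1}$ be nonnegative with $\sum_j j\alpha_j=1$ and $\alpha_1<1$, and for $\omega\ge1$ let \[q_j^{(\omega)}=\frac{j\alpha_j}{\omega^{j-1}h_j(\omega)}\left(\frac{1-\sum_{i\ge1}\frac{1}{4^{i-1}}\binom{2i-1}{i-1}\frac{i\alpha_i}{\omega^{i-1}h_i(\omega)}}{4}\right)^{j-1},\qquad h_p(\omega)=\sum_{s=0}^{p-1}(4\omega)^{-s}\binom{2s}{s}.\] Then for every $j\ge1$, the function $\omega\mapsto q_j^{(\omega)}$ is nonincreasing on $[1,+\infty)$. Moreover, if $j\ge2$ and $\alpha_j>0$, this function is (strictly) decreasing.
   Context: ($\mathbf q^{(\omega)}$ is the unique weight sequence whose infinite Boltzmann planar map has root face half-degree law $(j\alpha_j)$ and hyperbolicity parameter $\omega$, but the claim only concerns the explicit formula above.) *)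

From Stdlib Require Import Reals.
From Coquelicot Require Import Coquelicot.
Open Scope R_scope.

Definition hfun (p : nat) (w : R) : R :=
  sum_n (fun s => / (4 * w) ^ s * Binomial.C (2 * s) s) (p - 1).

(* i-th term of the inner series; alpha is indexed from 1, the i = 0 term is 0 *)
Definition inner_term (alpha : nat -> R) (w : R) (i : nat) : R :=
  / 4 ^ (i - 1) * Binomial.C (2 * i - 1) (i - 1)
    * (INR i * alpha i / (w ^ (i - 1) * hfun i w)).

Definition inner_sum (alpha : nat -> R) (w : R) : R :=
  Series (inner_term alpha w).

Definition qfun (alpha : nat -> R) (j : nat) (w : R) : R :=
  INR j * alpha j / (w ^ (j - 1) * hfun j w)
    * ((1 - inner_sum alpha w) / 4) ^ (j - 1).

From Stdlib Require Import Reals Lra Lia.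
From Coquelicot Require Import Coquelicot.
Open Scope R_scope.

(* Write b_s = C(2s,s)/4^s, G_n(w) = w^n h_(n+1)(w) = sum_(s<=n) w^(n-s) b_s and
   a_i = i alpha_i.  The i-th inner coefficient equals 2 b_i, so, using
   sum_i a_i = 1, one gets 1 - inner_sum = (w + 1/2) D(w) with
   D(w) = sum_i a_i phi_i(w) and phi_(n+1)(w) = (1 - 2 b_(n+1) / G_n(w)) / (w + 1/2).
   Hence q_(n+1)(w) = a_(n+1) 4^(-n) ((w + 1/2)^n / G_n(w)) D(w)^n.
   Both (w + 1/2)^n / G_n(w) and every phi_i are nonincreasing on [1, oo): the
   numerators of their derivatives are polynomial expressions in w obeying
   recursions in n whose terms are nonnegative for w >= 1, because
   G_n(w) >= G_n(1) = 2 (n+1) b_(n+1).  For i >= 2 and w > 1 the derivative of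
   phi_i is negative, which gives strictness. *)

Lemma derive_nonpos_antitone (f df : R -> R) (c : R) :
  (forall x, c <= x -> is_derive f x (df x)) -> (forall x, c <= x -> df x <= 0) ->
  forall a b, c <= a -> a <= b -> f b <= f a.
Proof.
  intros Hd Hneg a b Ha Hab.
  destruct (Rle_lt_or_eq_dec _ _ Hab) as [Hlt | <-]; [|lra].
  destruct (MVT_cor2 f df a b Hlt) as [x [Heq Hx]].
  - intros x Hx; apply is_derive_Reals, Hd; lra.
  - pose proof (Hneg x ltac:(lra)); nra.
Qed.

Lemma derive_neg_strict_antitone (f df : R -> R) (c : R) :
  (forall x, c <= x -> is_derive f x (df x)) -> (forall x, c < x -> df x < 0) ->
  forall a b, c <= a -> a < b -> f b < f a.
Proof.
  intros Hd Hneg a b Ha Hab.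
  destruct (MVT_cor2 f df a b Hab) as [x [Heq Hx]].
  - intros x Hx; apply is_derive_Reals, Hd; lra.
  - pose proof (Hneg x ltac:(lra)); nra.
Qed.

Lemma Rdiv_le_one x y : 0 < y -> x <= y -> x / y <= 1.
Proof. intros Hy Hxy; apply (Rmult_le_reg_r y); [lra|]; field_simplify; lra. Qed.

Definition cbinom (s : nat) : R := / 4 ^ s * Binomial.C (2 * s) s.

Lemma cbinom0 : cbinom 0 = 1.
Proof. unfold cbinom, Binomial.C; simpl; field. Qed.

Lemma cbinomS s : cbinom (S s) = cbinom s * (2 * INR s + 1) / (2 * INR s + 2).
Proof.
  unfold cbinom, Binomial.C.
  replace (2 * S s - S s)%nat with (S s) by lia.
  replace (2 * s - s)%nat with s by lia.
  replace (2 * S s)%nat with (S (S (2 * s))) by lia.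
  rewrite !fact_simpl, !mult_INR, !S_INR, !mult_INR; simpl (INR 2); simpl pow.
  pose proof (INR_fact_neq_0 s); pose proof (INR_fact_neq_0 (2 * s)); pose proof (pos_INR s).
  field; repeat split; try lra; apply pow_nonzero; lra.
Qed.

Lemma cbinom_gt0 s : 0 < cbinom s.
Proof.
  induction s as [|s IH]; [rewrite cbinom0; lra|].
  rewrite cbinomS; pose proof (pos_INR s).
  apply Rdiv_lt_0_compat; [apply Rmult_lt_0_compat|]; lra.
Qed.

Lemma inner_coef_cbinom n :
  / 4 ^ (S n - 1) * Binomial.C (2 * S n - 1) (S n - 1) = 2 * cbinom (S n).
Proof.
  unfold cbinom, Binomial.C.
  replace (S n - 1)%nat with n by lia.
  replace (2 * S n - 1 - n)%nat with (S n) by lia.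
  replace (2 * S n - 1)%nat with (S (2 * n)) by lia.
  replace (2 * S n - S n)%nat with (S n) by lia.
  replace (2 * S n)%nat with (S (S (2 * n))) by lia.
  rewrite !fact_simpl, !mult_INR, !S_INR, !mult_INR; simpl (INR 2); simpl pow.
  pose proof (INR_fact_neq_0 n); pose proof (INR_fact_neq_0 (2 * n)); pose proof (pos_INR n).
  field; repeat split; try lra; apply pow_nonzero; lra.
Qed.

Fixpoint hpoly (n : nat) (w : R) : R :=
  match n with O => 1 | S m => w * hpoly m w + cbinom (S m) end.

Fixpoint hpoly_deriv (n : nat) (w : R) : R :=
  match n with O => 0 | S m => hpoly m w + w * hpoly_deriv m w end.

Lemma hpoly_hfun n w : w <> 0 -> w ^ n * hfun (S n) w = hpoly n w.
Proof.
  intro Hw; unfold hfun; replace (S n - 1)%nat with n by lia.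
  induction n as [|n IH].
  - rewrite sum_O; unfold Binomial.C; simpl; field.
  - rewrite sum_Sn; simpl hpoly; rewrite <- IH.
    unfold cbinom, plus; simpl; rewrite Rpow_mult_distr.
    field; repeat split; try apply pow_nonzero; lra.
Qed.

Lemma is_derive_hpoly n w : is_derive (hpoly n) w (hpoly_deriv n w).
Proof.
  induction n as [|n IH]; simpl.
  - apply (is_derive_const (K := R_AbsRing) 1 w).
  - evar (d : R); replace (hpoly n w + w * hpoly_deriv n w) with d; subst d.
    + apply (is_derive_plus (K := R_AbsRing) (fun x => x * hpoly n x)).
      * apply (is_derive_mult (K := R_AbsRing) (fun x => x)); [apply is_derive_id | exact IH |].
        intros; apply Rmult_comm.
      * apply is_derive_const.
    + unfold plus, mult, one, zero; simpl; ring.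
Qed.

Lemma hpoly_1 n : hpoly n 1 = 2 * (INR n + 1) * cbinom (S n).
Proof.
  induction n as [|n IH]; simpl hpoly.
  - rewrite cbinomS, cbinom0; simpl; field.
  - rewrite IH, (cbinomS (S n)), S_INR; pose proof (pos_INR n); field; lra.
Qed.

Lemma hpoly_lb n w : 1 <= w -> 2 * (INR n + 1) * cbinom (S n) <= hpoly n w.
Proof.
  intro Hw; rewrite <- hpoly_1.
  induction n as [|n IH]; simpl hpoly; [lra|].
  assert (0 <= hpoly n 1)
    by (rewrite hpoly_1; pose proof (pos_INR n); pose proof (cbinom_gt0 (S n)); nra).
  nra.
Qed.

Lemma hpoly_gt0 n w : 1 <= w -> 0 < hpoly n w.
Proof.
  intro Hw; pose proof (hpoly_lb n w Hw); pose proof (pos_INR n); pose proof (cbinom_gt0 (S n)).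
  nra.
Qed.

Lemma hpoly_deriv_ge n w : 1 <= w -> INR n * hpoly n w <= (w + /2) * hpoly_deriv n w.
Proof.
  intro Hw; induction n as [|n IH]; simpl hpoly; simpl hpoly_deriv; [simpl; lra|].
  rewrite S_INR; pose proof (hpoly_lb n w Hw).
  assert (0 <= w * ((w + /2) * hpoly_deriv n w - INR n * hpoly n w))
    by (apply Rmult_le_pos; lra).
  nra.
Qed.

Definition phi (i : nat) (w : R) : R :=
  match i with
  | O => 0
  | S n => (1 - 2 * cbinom (S n) / hpoly n w) / (w + /2)
  end.

Definition phi_numer (n : nat) (w : R) : R :=
  hpoly n w ^ 2 - 2 * cbinom (S n) * hpoly n w
  - 2 * cbinom (S n) * (w + /2) * hpoly_deriv n w.

Lemma is_derive_phi n w : 1 <= w ->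
  is_derive (phi (S n)) w (- phi_numer n w / (hpoly n w ^ 2 * (w + /2) ^ 2)).
Proof.
  intro Hw; pose proof (hpoly_gt0 n w Hw).
  evar (d : R); replace (- phi_numer n w / _) with d; subst d.
  - apply is_derive_div; [| | lra].
    + apply (is_derive_minus (K := R_AbsRing) (fun _ => 1)); [apply is_derive_const|].
      apply (is_derive_scal (fun x => / hpoly n x)).
      apply is_derive_inv; [apply is_derive_hpoly | lra].
    + apply (is_derive_plus (K := R_AbsRing) (fun x => x) (fun _ => /2));
        [apply is_derive_id | apply is_derive_const].
  - unfold phi_numer, minus, plus, scal, mult, opp, one, zero; simpl.
    field; lra.
Qed.

Lemma phi_numer_S n w : 1 <= w -> 0 <= phi_numer n w ->
  2 * cbinom (S n) * hpoly n w * (w - 1) <= (2 * INR n + 4) * phi_numer (S n) w.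
Proof.
  intros Hw HK.
  set (G := hpoly n w); set (b := cbinom (S n)).
  assert (Hrec : (2 * INR n + 4) * phi_numer (S n) w =
    (2 * INR n + 3) * w * phi_numer n w
    + (G - (2 * INR n + 2) * b) * (G + b)
    + G ^ 2 * (w - 1) * ((2 * INR n + 4) * w + 1)
    + 2 * b * G * (w - 1)).
  { unfold phi_numer, G, b; simpl hpoly; simpl hpoly_deriv.
    rewrite (cbinomS (S n)), S_INR; pose proof (pos_INR n); field; lra. }
  (* Every summand on the right is nonnegative, the second one by [hpoly_lb]. *)
  pose proof (hpoly_lb n w Hw); pose proof (hpoly_gt0 n w Hw).
  pose proof (pos_INR n); pose proof (cbinom_gt0 (S n)).
  assert (0 <= (G - (2 * INR n + 2) * b) * (G + b)) by (apply Rmult_le_pos; unfold G, b; nra).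
  assert (0 <= G ^ 2 * (w - 1) * ((2 * INR n + 4) * w + 1)).
  { apply Rmult_le_pos; [apply Rmult_le_pos; [apply pow2_ge_0|]|]; nra. }
  assert (0 <= (2 * INR n + 3) * w * phi_numer n w)
    by (apply Rmult_le_pos; [nra | exact HK]).
  lra.
Qed.

Lemma phi_numer_ge0 n w : 1 <= w -> 0 <= phi_numer n w.
Proof.
  intro Hw; induction n as [|n IH].
  - unfold phi_numer; simpl; rewrite cbinomS, cbinom0; simpl; lra.
  - pose proof (phi_numer_S n w Hw IH); pose proof (hpoly_gt0 n w Hw).
    pose proof (cbinom_gt0 (S n)); pose proof (pos_INR n).
    assert (0 <= 2 * cbinom (S n) * hpoly n w * (w - 1))
      by (apply Rmult_le_pos; [|lra]; nra).
    nra.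
Qed.

Lemma phi_numer_gt0 n w : 1 < w -> 0 < phi_numer (S n) w.
Proof.
  intro Hw; pose proof (Rlt_le _ _ Hw) as Hw'.
  pose proof (phi_numer_S n w Hw' (phi_numer_ge0 n w Hw')).
  pose proof (hpoly_gt0 n w Hw'); pose proof (cbinom_gt0 (S n)); pose proof (pos_INR n).
  assert (0 < 2 * cbinom (S n) * hpoly n w * (w - 1))
    by (apply Rmult_lt_0_compat; [|lra]; nra).
  nra.
Qed.

Lemma phi_range i w : 1 <= w -> 0 <= phi i w <= 1.
Proof.
  intro Hw; destruct i as [|n]; simpl; [lra|].
  pose proof (hpoly_lb n w Hw); pose proof (hpoly_gt0 n w Hw).
  pose proof (pos_INR n); pose proof (cbinom_gt0 (S n)).
  assert (0 <= 2 * cbinom (S n) / hpoly n w <= 1).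
  { split; [apply Rdiv_le_0_compat; lra|].
    apply Rdiv_le_one; [lra | nra]. }
  split; [apply Rdiv_le_0_compat; lra|].
  apply Rdiv_le_one; lra.
Qed.

Lemma phi_antitone i a b : 1 <= a -> a <= b -> phi i b <= phi i a.
Proof.
  destruct i as [|n]; [simpl; lra|].
  apply (derive_nonpos_antitone _ _ 1 (is_derive_phi n)).
  intros x Hx; pose proof (hpoly_gt0 n x Hx).
  assert (0 <= phi_numer n x / (hpoly n x ^ 2 * (x + /2) ^ 2)).
  { apply Rdiv_le_0_compat; [now apply phi_numer_ge0|].
    apply Rmult_lt_0_compat; apply pow_lt; lra. }
  rewrite Rdiv_opp_l; lra.
Qed.

Lemma phi_strict_antitone n a b : 1 <= a -> a < b -> phi (S (S n)) b < phi (S (S n)) a.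
Proof.
  apply (derive_neg_strict_antitone _ _ 1 (is_derive_phi (S n))).
  intros x Hx; pose proof (hpoly_gt0 (S n) x (Rlt_le _ _ Hx)).
  assert (0 < phi_numer (S n) x / (hpoly (S n) x ^ 2 * (x + /2) ^ 2)).
  { apply Rdiv_lt_0_compat; [now apply phi_numer_gt0|].
    apply Rmult_lt_0_compat; apply pow_lt; lra. }
  rewrite Rdiv_opp_l; lra.
Qed.

Definition hratio (n : nat) (w : R) : R := (w + /2) ^ n / hpoly n w.

Lemma hratio_gt0 n w : 1 <= w -> 0 < hratio n w.
Proof.
  intro Hw; apply Rdiv_lt_0_compat; [apply pow_lt; lra | now apply hpoly_gt0].
Qed.

Lemma hratio_antitone n a b : 1 <= a -> a <= b -> hratio n b <= hratio n a.
Proof.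
  apply (derive_nonpos_antitone _
    (fun w => (INR n * 1 * (w + /2) ^ pred n * hpoly n w - (w + /2) ^ n * hpoly_deriv n w)
              / hpoly n w ^ 2) 1).
  - intros x Hx; apply is_derive_div;
      [| apply is_derive_hpoly | apply Rgt_not_eq, hpoly_gt0; lra].
    apply (is_derive_pow (fun w => w + /2)); auto_derive; auto; ring.
  - intros x Hx; pose proof (hpoly_gt0 n x Hx).
    assert (0 <= (x + /2) ^ n * hpoly_deriv n x - INR n * (x + /2) ^ pred n * hpoly n x).
    { destruct n as [|n]; [simpl; lra|].
      pose proof (hpoly_deriv_ge (S n) x Hx); simpl pred.
      assert (0 < (x + /2) ^ n) by (apply pow_lt; lra).
      replace ((x + /2) ^ S n) with ((x + /2) ^ n * (x + /2)) by (simpl; ring).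
      nra. }
    assert (0 < / hpoly n x ^ 2) by (apply Rinv_0_lt_compat, pow_lt; lra).
    unfold Rdiv; rewrite Rmult_1_r; nra.
Qed.

Lemma Series_ge_term (u : nat -> R) m :
  (forall k, 0 <= u k) -> ex_series u -> u m <= Series u.
Proof.
  intros Hu Hex; apply Rle_trans with (sum_f_R0 u m).
  - destruct m as [|m]; simpl; [lra|].
    pose proof (cond_pos_sum u m Hu); pose proof (Hu (S m)); lra.
  - apply sum_incr; [apply is_series_Reals, Series_correct, Hex | exact Hu].
Qed.

Lemma Series_ge0 (u : nat -> R) : (forall k, 0 <= u k) -> ex_series u -> 0 <= Series u.
Proof. intros Hu Hex; apply Rle_trans with (u O); [apply Hu | now apply Series_ge_term]. Qed.

Lemma Series_lt (u v : nat -> R) m :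
  (forall k, v k <= u k) -> v m < u m -> ex_series u -> ex_series v -> Series v < Series u.
Proof.
  intros Hle Hlt Hu Hv.
  assert (Hd : ex_series (fun k => u k - v k))
    by (apply (ex_series_minus (K := R_AbsRing) (V := R_NormedModule)); assumption).
  pose proof (Series_ge_term (fun k => u k - v k) m) as Hterm.
  rewrite Series_minus in Hterm by assumption.
  assert (u m - v m <= Series u - Series v)
    by (apply Hterm; [intro k; specialize (Hle k); lra | exact Hd]).
  lra.
Qed.

Lemma pow_lt_compat_S x y n : 0 <= x < y -> x ^ S n < y ^ S n.
Proof.
  intro Hxy; induction n as [|n IH]; [simpl; lra|].
  change (x * x ^ S n < y * y ^ S n).
  apply Rmult_le_0_lt_compat; [lra | apply pow_le; lra | lra | exact IH].
Qed.

Lemma mul_pow_le_compat c r1 r2 d1 d2 n :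
  0 <= c -> 0 <= r2 <= r1 -> 0 <= d2 <= d1 -> c * r2 * d2 ^ n <= c * r1 * d1 ^ n.
Proof.
  intros Hc Hr Hd; apply Rmult_le_compat.
  - apply Rmult_le_pos; lra.
  - apply pow_le; lra.
  - apply Rmult_le_compat_l; lra.
  - apply pow_incr; lra.
Qed.

Lemma mul_pow_lt_compat c r1 r2 d1 d2 n :
  0 < c -> 0 < r2 <= r1 -> 0 <= d2 < d1 -> c * r2 * d2 ^ S n < c * r1 * d1 ^ S n.
Proof.
  intros Hc Hr Hd; apply Rlt_le_trans with (c * r2 * d1 ^ S n).
  - apply Rmult_lt_compat_l; [apply Rmult_lt_0_compat; lra | now apply pow_lt_compat_S].
  - apply Rmult_le_compat_r; [apply pow_le; lra | apply Rmult_le_compat_l; lra].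
Qed.

Section InnerSeries.

Variable alpha : nat -> R.
Hypothesis alpha_ge0 : forall j : nat, (1 <= j)%nat -> 0 <= alpha j.
Hypothesis sum_weights : is_series (fun j : nat => INR j * alpha j) 1.

Lemma weight_ge0 i : 0 <= INR i * alpha i.
Proof.
  destruct i as [|i]; [simpl; lra|].
  apply Rmult_le_pos; [apply pos_INR | apply alpha_ge0; lia].
Qed.

Definition phi_series (w : R) : R := Series (fun i => INR i * alpha i * phi i w).

Lemma ex_series_weighted_phi w : 1 <= w -> ex_series (fun i => INR i * alpha i * phi i w).
Proof.
  intro Hw; apply (ex_series_le (K := R_AbsRing) (V := R_CompleteNormedModule) _
                    (fun i => INR i * alpha i)); [| now exists 1].
  intro i; change norm with Rabs; simpl.
  pose proof (weight_ge0 i); pose proof (phi_range i w Hw).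
  rewrite Rabs_pos_eq; nra.
Qed.

Lemma inner_term_phi w i : 1 <= w ->
  inner_term alpha w i = INR i * alpha i - (w + /2) * (INR i * alpha i * phi i w).
Proof.
  intro Hw; unfold inner_term; destruct i as [|n]; [simpl; lra|].
  rewrite inner_coef_cbinom; replace (S n - 1)%nat with n by lia.
  rewrite hpoly_hfun by lra; simpl phi.
  pose proof (hpoly_gt0 n w Hw); field; lra.
Qed.

Lemma one_sub_inner_sum w : 1 <= w -> 1 - inner_sum alpha w = (w + /2) * phi_series w.
Proof.
  intro Hw; unfold inner_sum, phi_series.
  rewrite (Series_ext _ _ (fun i => inner_term_phi w i Hw)).
  rewrite Series_minus, Series_scal_l, (is_series_unique _ _ sum_weights); [ring | now exists 1 |].
  apply (ex_series_scal_l (K := R_AbsRing) (V := R_NormedModule)), ex_series_weighted_phi, Hw.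
Qed.

Lemma qfun_factor n w : 1 <= w ->
  qfun alpha (S n) w = INR (S n) * alpha (S n) * (/4) ^ n * hratio n w * phi_series w ^ n.
Proof.
  intro Hw; unfold qfun, hratio; replace (S n - 1)%nat with n by lia.
  rewrite hpoly_hfun, one_sub_inner_sum by lra.
  unfold Rdiv; rewrite !Rpow_mult_distr; ring.
Qed.

Lemma phi_series_ge0 w : 1 <= w -> 0 <= phi_series w.
Proof.
  intro Hw; apply Series_ge0; [| now apply ex_series_weighted_phi].
  intro i; pose proof (weight_ge0 i); pose proof (phi_range i w Hw); nra.
Qed.

Lemma phi_series_antitone w1 w2 : 1 <= w1 -> w1 <= w2 -> phi_series w2 <= phi_series w1.
Proof.
  intros Hw1 Hw12; apply Series_le; [| now apply ex_series_weighted_phi].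
  intro i; pose proof (weight_ge0 i); pose proof (phi_range i w2 ltac:(lra)).
  pose proof (phi_antitone i w1 w2 Hw1 Hw12); split; nra.
Qed.

Lemma phi_series_strict_antitone n w1 w2 :
  0 < alpha (S (S n)) -> 1 <= w1 -> w1 < w2 -> phi_series w2 < phi_series w1.
Proof.
  intros Ha Hw1 Hw12; apply (Series_lt _ _ (S (S n))); try (apply ex_series_weighted_phi; lra).
  - intro i; pose proof (weight_ge0 i).
    pose proof (phi_antitone i w1 w2 Hw1 (Rlt_le _ _ Hw12)); nra.
  - apply Rmult_lt_compat_l; [apply Rmult_lt_0_compat; [apply lt_0_INR; lia | exact Ha] |].
    now apply phi_strict_antitone.
Qed.

End InnerSeries.

Theorem lemma15 (alpha : nat -> R)
  (Hnn : forall j : nat, (1 <= j)%nat -> 0 <= alpha j)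
  (Hsum : is_series (fun j : nat => INR j * alpha j) 1)
  (H1 : alpha 1%nat < 1) :
  forall j : nat, (1 <= j)%nat ->
    (forall w1 w2 : R, 1 <= w1 -> w1 <= w2 -> qfun alpha j w2 <= qfun alpha j w1) /\
    ((2 <= j)%nat -> 0 < alpha j ->
     forall w1 w2 : R, 1 <= w1 -> w1 < w2 -> qfun alpha j w2 < qfun alpha j w1).
Proof.
  intros [|n] Hj; [lia|].
  pose proof (pow_lt (/4) n ltac:(lra)) as Hquarter.
  split.
  - intros w1 w2 Hw1 Hw12.
    rewrite !(qfun_factor alpha Hnn Hsum) by lra.
    apply mul_pow_le_compat.
    + apply Rmult_le_pos; [apply (weight_ge0 alpha Hnn) | lra].
    + split; [apply Rlt_le, hratio_gt0 | apply hratio_antitone]; lra.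
    + split; [apply (phi_series_ge0 alpha Hnn Hsum) |
              apply (phi_series_antitone alpha Hnn Hsum)]; lra.
  - intros Hj2 Ha w1 w2 Hw1 Hw12; destruct n as [|n]; [lia|].
    rewrite !(qfun_factor alpha Hnn Hsum) by lra.
    apply mul_pow_lt_compat.
    + apply Rmult_lt_0_compat; [|exact Hquarter].
      apply Rmult_lt_0_compat; [apply lt_0_INR; lia | exact Ha].
    + split; [apply hratio_gt0 | apply hratio_antitone]; lra.
    + split; [apply (phi_series_ge0 alpha Hnn Hsum) |
              apply (phi_series_strict_antitone alpha Hnn Hsum n)]; lra.
Qed.
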